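(* Let $\mathfrak{M}=(S,\mathcal{L})$ be a Veblenian gamma space all of whose lines have at least $4$ points, and let $\mathcal{H}$ be a hyperplane of $\mathfrak{M}$. A set $X\subseteq S$ is a strong subspace of the complement $\mathfrak{M}\setminus\mathcal{H}$ if and only if there is a strong subspace $Y$ of $\mathfrak{M}$ such that $X=Y\setminus\mathcal{H}$.
   Context: A partial linear space is a pair $(S,\mathcal{L})$ of points and lines ($\mathcal{L}$ a family of subsets of $S$) such that every line has at least two points, every point is on a line, and two distinct lines share at most one point; points are collinear ($a\sim b$) if some line contains both, and two lines are adjacent if they share a point. A subspace is a set $X$ such that every line meeting $X$ in at least two points lies in $X$; it is strong if any two of its points are collinear. A hyperplane is a proper subspace meeting every line. A gamma space is a partial linear space in which, for every point $a$, the set of points collinear with $a$ is a subspace. It is Veblenian if for any two distinct lines $L_1,L_2$ through a point $p$ and any two distinct lines $K_1,K_2$ not through $p$ such that each $K_j$ meets both $L_1$ and $L_2$, the lines $K_1,K_2$ meet. For a hyperplane $\mathcal{H}$, every line $L\not\subseteq\mathcal{H}$ meets $\mathcal{H}$ in a unique point $L^\infty$. The complement $\mathfrak{M}\setminus\mathcal{H}$ is the structure with point set $S\setminus\mathcal{H}$, lines $L\setminus\mathcal{H}$ for $L\in\mathcal{L}$ with $L\not\subseteq\mathcal{H}$, and parallelism $\parallel_{\mathcal{H}}$ given by $L\parallel_\mathcal{H}K$ iff $L^\infty=K^\infty$; subspaces and strong subspaces of the complement are taken with respect to its points and lines. *)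

Definition subset {T : Type} (A B : T -> Prop) : Prop := forall x, A x -> B x.
Definition seteq {T : Type} (A B : T -> Prop) : Prop := forall x, A x <-> B x.

Definition collinear {T : Type} (Ln : (T -> Prop) -> Prop) (a b : T) : Prop :=
  exists l, Ln l /\ l a /\ l b.

(* Partial linear space (S,L) with S = the whole type T. *)
Definition partial_linear_space {T : Type} (Ln : (T -> Prop) -> Prop) : Prop :=
  (forall l, Ln l -> exists a b, a <> b /\ l a /\ l b) /\
  (forall p : T, exists l, Ln l /\ l p) /\
  (forall l1 l2, Ln l1 -> Ln l2 -> ~ seteq l1 l2 ->
     forall a b, l1 a -> l1 b -> l2 a -> l2 b -> a = b).

Definition subspace {T : Type} (P : T -> Prop) (Ln : (T -> Prop) -> Prop)
  (X : T -> Prop) : Prop :=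
  subset X P /\
  (forall l, Ln l -> forall a b, a <> b -> l a -> l b -> X a -> X b -> subset l X).

Definition strong_subspace {T : Type} (P : T -> Prop) (Ln : (T -> Prop) -> Prop)
  (X : T -> Prop) : Prop :=
  subspace P Ln X /\ (forall a b, X a -> X b -> collinear Ln a b).

Definition fullset {T : Type} : T -> Prop := fun _ => True.

Definition gamma_space {T : Type} (Ln : (T -> Prop) -> Prop) : Prop :=
  partial_linear_space Ln /\ (forall a, subspace fullset Ln (collinear Ln a)).

Definition meet {T : Type} (l k : T -> Prop) : Prop := exists x, l x /\ k x.

Definition veblenian {T : Type} (Ln : (T -> Prop) -> Prop) : Prop :=
  forall (p : T) L1 L2 K1 K2,
    Ln L1 -> Ln L2 -> Ln K1 -> Ln K2 ->
    ~ seteq L1 L2 -> L1 p -> L2 p ->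
    ~ seteq K1 K2 -> ~ K1 p -> ~ K2 p ->
    meet K1 L1 -> meet K1 L2 -> meet K2 L1 -> meet K2 L2 ->
    meet K1 K2.

Definition lines_at_least_4 {T : Type} (Ln : (T -> Prop) -> Prop) : Prop :=
  forall l, Ln l -> exists a b c d : T,
    l a /\ l b /\ l c /\ l d /\
    a <> b /\ a <> c /\ a <> d /\ b <> c /\ b <> d /\ c <> d.

Definition hyperplane {T : Type} (Ln : (T -> Prop) -> Prop) (H : T -> Prop) : Prop :=
  subspace fullset Ln H /\ (exists x, ~ H x) /\ (forall l, Ln l -> meet l H).

(* Complement M \ H: points S \ H, lines L \ H for lines L not contained in H.
   (The parallelism of the complement plays no role in the notions of
   (strong) subspace and is omitted.) *)
Definition compl_points {T : Type} (H : T -> Prop) : T -> Prop := fun x => ~ H x.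

Definition compl_lines {T : Type} (Ln : (T -> Prop) -> Prop) (H : T -> Prop)
  (l' : T -> Prop) : Prop :=
  exists l, Ln l /\ ~ subset l H /\ seteq l' (fun x => l x /\ ~ H x).

From Stdlib Require Import Classical.

(* Given a strong subspace X of the complement, let Y consist of X together
   with the points lying on a line through two distinct points of X.  Points
   of Y are pairwise collinear because, in a gamma space, a point collinear
   with two points of a line is collinear with all of it.  The key fact is
   that if u is in X and v is a point of H on a secant of X, then every
   affine point of the line uv lies in X: Veblen's axiom, applied at v to the
   secant and the line uv, produces the required intersections, and lines
   with at least four points supply enough affine points on the secant to
   rule out the degenerate case where all these intersections fall into H.
   Closure of Y under lines then follows by distinguishing how many of the
   two given points lie in H. *)

Lemma strong_subspace_seteq {T : Type} (P : T -> Prop) (Ln' : (T -> Prop) -> Prop) X X' :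
  seteq X X' -> strong_subspace P Ln' X -> strong_subspace P Ln' X'.
Proof.
  intros E [[XP closed] coll]. split; [split|].
  - intros x x'. exact (XP x (proj2 (E x) x')).
  - intros l L a b ab la lb a' b' x lx. apply E.
    exact (closed l L a b ab la lb (proj2 (E a) a') (proj2 (E b) b') x lx).
  - intros a b a' b'. exact (coll a b (proj2 (E a) a') (proj2 (E b) b')).
Qed.

Section HyperplaneComplement.

Variables (T : Type) (Ln : (T -> Prop) -> Prop) (H : T -> Prop).
Hypotheses (gammaM : gamma_space Ln) (veblenM : veblenian Ln)
  (thickM : lines_at_least_4 Ln) (hypH : hyperplane Ln H).

Lemma seteq_lines_of_two_points l1 l2 a b :
  Ln l1 -> Ln l2 -> a <> b -> l1 a -> l1 b -> l2 a -> l2 b -> seteq l1 l2.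
Proof.
  intros L1 L2 ab a1 b1 a2 b2. destruct gammaM as [[_ [_ two_points]] _].
  apply NNPP; intro N. exact (ab (two_points l1 l2 L1 L2 N a b a1 b1 a2 b2)).
Qed.

Lemma not_seteq_of_point (l1 l2 : T -> Prop) a : l1 a -> ~ l2 a -> ~ seteq l1 l2.
Proof. intros a1 a2 E. exact (a2 (proj1 (E a) a1)). Qed.

Lemma hyperplane_line_uniq l a x y :
  Ln l -> l a -> ~ H a -> l x -> l y -> H x -> H y -> x = y.
Proof.
  intros L la na lx ly hx hy. destruct hypH as [[_ closed] _].
  apply NNPP; intro N. exact (na (closed l L x y N lx ly hx hy a la)).
Qed.

Lemma line_point_off_hyperplane K a c d :
  Ln K -> K a -> ~ H a -> exists e, K e /\ ~ H e /\ e <> c /\ e <> d.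
Proof.
  intros L Ka na. apply NNPP; intro none.
  assert (bad : forall e, K e -> H e \/ e = c \/ e = d).
  { intros e Ke. apply NNPP; intro N. apply none. exists e. tauto. }
  destruct (thickM K L) as [p1 [p2 [p3 [p4 [k1 [k2 [k3 [k4 D]]]]]]]].
  pose proof (bad p1 k1). pose proof (bad p2 k2).
  pose proof (bad p3 k3). pose proof (bad p4 k4).
  pose proof (hyperplane_line_uniq K a p1 p2 L Ka na k1 k2).
  pose proof (hyperplane_line_uniq K a p1 p3 L Ka na k1 k3).
  pose proof (hyperplane_line_uniq K a p1 p4 L Ka na k1 k4).
  pose proof (hyperplane_line_uniq K a p2 p3 L Ka na k2 k3).
  pose proof (hyperplane_line_uniq K a p2 p4 L Ka na k2 k4).
  pose proof (hyperplane_line_uniq K a p3 p4 L Ka na k3 k4).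
  intuition (subst; congruence).
Qed.

Lemma collinear_sym a b : collinear Ln a b -> collinear Ln b a.
Proof. intros [l [L [la lb]]]. exists l. auto. Qed.

Lemma collinear_line_closed q l a b p :
  collinear Ln q a -> collinear Ln q b -> a <> b -> Ln l -> l a -> l b -> l p ->
  collinear Ln q p.
Proof.
  intros qa qb ab L la lb lp. destruct gammaM as [_ perp].
  exact (proj2 (perp q) l L a b ab la lb qa qb p lp).
Qed.

Lemma strong_subspace_trace Y :
  strong_subspace fullset Ln Y ->
  strong_subspace (compl_points H) (compl_lines Ln H) (fun x => Y x /\ ~ H x).
Proof.
  intros [[_ closed] coll]. split; [split|].
  - intros x [_ nx]. exact nx.
  - intros l' [l [L [_ El]]] a b ab la lb [Ya _] [Yb _] x lx.
    apply El in la, lb, lx.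
    split; [exact (closed l L a b ab (proj1 la) (proj1 lb) Ya Yb x (proj1 lx)) |].
    exact (proj2 lx).
  - intros a b [Ya na] [Yb nb]. destruct (coll a b Ya Yb) as [l [L [la lb]]].
    exists (fun x => l x /\ ~ H x). split; [|tauto].
    exists l. split; [exact L | split; [intro sub; exact (na (sub a la)) | intro; tauto]].
Qed.

Section StrongSubspaceOfComplement.

Variable X : T -> Prop.
Hypothesis strongX : strong_subspace (compl_points H) (compl_lines Ln H) X.

Definition secant (p : T) : Prop :=
  exists a b l, X a /\ X b /\ a <> b /\ Ln l /\ l a /\ l b /\ l p.

Definition hull (p : T) : Prop := X p \/ secant p.

Lemma X_off_H x : X x -> ~ H x.
Proof. intro Xx. exact (proj1 (proj1 strongX) x Xx). Qed.

Lemma X_line_closed l a b p :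
  Ln l -> a <> b -> l a -> l b -> X a -> X b -> l p -> ~ H p -> X p.
Proof.
  intros L ab la lb Xa Xb lp np. destruct strongX as [[_ closed] _].
  apply (closed (fun x => l x /\ ~ H x)) with a b; try tauto.
  - exists l. repeat split; try tauto. intro sub. exact (X_off_H a Xa (sub a la)).
  - split; [exact la | exact (X_off_H a Xa)].
  - split; [exact lb | exact (X_off_H b Xb)].
Qed.

Lemma X_collinear a b : X a -> X b -> collinear Ln a b.
Proof.
  intros Xa Xb. destruct (proj2 strongX a b Xa Xb) as [l' [[l [L [_ El]]] [la lb]]].
  exists l. apply El in la, lb. tauto.
Qed.

Lemma hull_off_H p : hull p -> ~ H p -> X p.
Proof.
  intros [Xp | [a [b [l [Xa [Xb [ab [L [la [lb lp]]]]]]]]]] np; auto.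
  exact (X_line_closed l a b p L ab la lb Xa Xb lp np).
Qed.

Lemma hull_on_H p : hull p -> H p -> secant p.
Proof. intros [Xp | sp] hp; [exfalso; exact (X_off_H p Xp hp) | exact sp]. Qed.

Lemma X_collinear_hull x p : X x -> hull p -> collinear Ln x p.
Proof.
  intros Xx [Xp | [a [b [l [Xa [Xb [ab [L [la [lb lp]]]]]]]]]].
  - exact (X_collinear x p Xx Xp).
  - exact (collinear_line_closed x l a b p
             (X_collinear x a Xx Xa) (X_collinear x b Xx Xb) ab L la lb lp).
Qed.

Lemma hull_collinear q p : hull q -> hull p -> collinear Ln q p.
Proof.
  intros Yq [Xp | [a [b [l [Xa [Xb [ab [L [la [lb lp]]]]]]]]]].
  - exact (collinear_sym p q (X_collinear_hull p q Xp Yq)).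
  - apply (collinear_line_closed q l a b p); auto;
      apply collinear_sym, X_collinear_hull; assumption.
Qed.

(* Veblen's axiom at [v] for the secant [K] through [c, d'] and the line [l]
   through [u, v]: the line [c w] meets the line [u d'] in a point [z]; if [z]
   is affine it lies in [X], and then so does [w]. *)
Lemma veblen_secant_step K l K1 u v c d' w :
  Ln K -> Ln l -> Ln K1 -> X u -> X c -> X d' -> H v ->
  K c -> K d' -> K v -> d' <> c -> l u -> l v -> l w -> ~ l c ->
  K1 c -> K1 w -> ~ H w ->
  X w \/ exists K2 z, Ln K2 /\ K2 u /\ K2 d' /\ K1 z /\ K2 z /\ H z.
Proof.
  intros LK Ll LK1 Xu Xc Xd' hv Kc Kd' Kv d'c lu lv lw nlc K1c K1w nw.
  assert (uv : u <> v) by (intro; subst; exact (X_off_H v Xu hv)).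
  assert (wv : w <> v) by (intro; subst; exact (nw hv)).
  assert (d'v : d' <> v) by (intro; subst; exact (X_off_H v Xd' hv)).
  assert (K_not_l : forall x, K x -> x <> v -> ~ l x).
  { intros x Kx xv lx. apply nlc. apply (seteq_lines_of_two_points l K x v); auto. }
  destruct (X_collinear u d' Xu Xd') as [K2 [LK2 [K2u K2d']]].
  assert (K2_not_K : ~ K2 c).
  { intro K2c. apply (K_not_l u); auto.
    apply (seteq_lines_of_two_points K2 K c d'); auto. }
  assert (meet K1 K2) as [z [K1z K2z]].
  { apply (veblenM v K l K1 K2); auto.
    - exact (not_seteq_of_point K l c Kc nlc).
    - exact (not_seteq_of_point K1 K2 c K1c K2_not_K).
    - intro K1v. apply nlc. apply (seteq_lines_of_two_points K1 l v w); auto.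
    - intro K2v. apply (K_not_l d' Kd' d'v).
      apply (seteq_lines_of_two_points K2 l v u); auto.
    - exists c; auto.
    - exists w; auto.
    - exists d'; auto.
    - exists u; auto. }
  destruct (classic (H z)) as [hz | nz]; [right; exists K2, z; tauto | left].
  assert (ud' : u <> d') by (intro; subst; exact (K_not_l d' Kd' d'v lu)).
  assert (Xz : X z) by exact (X_line_closed K2 u d' z LK2 ud' K2u K2d' Xu Xd' K2z nz).
  assert (zc : z <> c) by (intro; subst; exact (K2_not_K K2z)).
  exact (X_line_closed K1 z c w LK1 zc K1z K1c Xz Xc K1w nw).
Qed.

Lemma X_line_to_secant_closed l u v w :
  X u -> secant v -> H v -> Ln l -> l u -> l v -> l w -> ~ H w -> X w.
Proof.
  intros Xu [c [d [K [Xc [Xd [cd [LK [Kc [Kd Kv]]]]]]]]] hv Ll lu lv lw nw.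
  assert (uv : u <> v) by (intro; subst; exact (X_off_H v Xu hv)).
  destruct (classic (l c)) as [lc | nlc].
  { assert (E : seteq l K).
    { apply (seteq_lines_of_two_points l K c v); auto.
      intro; subst; exact (X_off_H v Xc hv). }
    exact (X_line_closed K c d w LK cd Kc Kd Xc Xd (proj1 (E w) lw) nw). }
  assert (collinear Ln c w) as [K1 [LK1 [K1c K1w]]].
  { apply (collinear_line_closed c l u v w); auto.
    - exact (X_collinear c u Xc Xu).
    - exists K; auto. }
  destruct (line_point_off_hyperplane K c c d LK Kc (X_off_H c Xc))
    as [e [Ke [ne [ec ed]]]].
  assert (Xe : X e) by exact (X_line_closed K c d e LK cd Kc Kd Xc Xd Ke ne).
  destruct (veblen_secant_step K l K1 u v c d w LK Ll LK1 Xu Xc Xd hv Kc Kd Kv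
              (not_eq_sym cd) lu lv lw nlc K1c K1w nw)
    as [? | [K2 [z [LK2 [K2u [K2d [K1z [K2z hz]]]]]]]]; auto.
  destruct (veblen_secant_step K l K1 u v c e w LK Ll LK1 Xu Xc Xe hv Kc Ke Kv
              ec lu lv lw nlc K1c K1w nw)
    as [? | [K3 [z' [LK3 [K3u [K3e [K1z' [K3z' hz']]]]]]]]; auto.
  (* Otherwise the lines [u d] and [u e] both pass through the unique point
     of [H] on [c w], so they coincide with the secant, which then meets [l]
     in the affine point [u]. *)
  exfalso.
  assert (zz' : z = z')
    by exact (hyperplane_line_uniq K1 c z z' LK1 K1c (X_off_H c Xc) K1z K1z' hz hz').
  subst z'.
  assert (uz : u <> z) by (intro; subst; exact (X_off_H z Xu hz)).
  assert (E32 : seteq K3 K2)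
    by exact (seteq_lines_of_two_points K3 K2 u z LK3 LK2 uz K3u K3z' K2u K2z).
  assert (E2 : seteq K2 K).
  { apply (seteq_lines_of_two_points K2 K d e); auto. exact (proj1 (E32 e) K3e). }
  apply nlc. apply (seteq_lines_of_two_points l K u v); auto.
  exact (proj1 (E2 u) K2u).
Qed.

Lemma hull_line_closed_X_H l u v p :
  X u -> hull v -> H v -> Ln l -> l u -> l v -> l p -> hull p.
Proof.
  intros Xu Yv hv Ll lu lv lp.
  pose proof (hull_on_H v Yv hv) as sv.
  destruct (classic (H p)) as [hp | np].
  - destruct (line_point_off_hyperplane l u u u Ll lu (X_off_H u Xu))
      as [f [lf [nf [fu _]]]].
    right. exists u, f, l. repeat split; auto.
    exact (X_line_to_secant_closed l u v f Xu sv hv Ll lu lv lf nf).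
  - left. exact (X_line_to_secant_closed l u v p Xu sv hv Ll lu lv lp np).
Qed.

(* With [a] in [X] on a secant through [u], and [y] an affine point of the
   line [a v], Veblen's axiom at [v] makes the line [a w] meet the line [u y]
   in an affine point [z], which lies in [X]; so [w] is on the secant [a z]. *)
Lemma secant_line_closed_H_H l u v w :
  secant u -> secant v -> u <> v -> H u -> H v -> Ln l -> l u -> l v -> l w ->
  secant w.
Proof.
  intros su sv uv hu hv Ll lu lv lw.
  destruct (classic (w = u)) as [-> | wu]; [exact su |].
  destruct (classic (w = v)) as [-> | wv]; [exact sv |].
  assert (l_in_H : forall x, l x -> H x).
  { destruct hypH as [[_ closed] _]. exact (closed l Ll u v uv lu lv hu hv). }
  pose proof su as [a [_ [_ [Xa _]]]].
  pose proof (X_off_H a Xa) as na.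
  assert (Yu : hull u) by (right; exact su).
  assert (Yv : hull v) by (right; exact sv).
  assert (nla : ~ l a) by (intro la; exact (na (l_in_H a la))).
  destruct (X_collinear_hull a v Xa Yv) as [M [LM [Ma Mv]]].
  assert (nMu : ~ M u)
    by (intro Mu; exact (uv (hyperplane_line_uniq M a u v LM Ma na Mu Mv hu hv))).
  destruct (line_point_off_hyperplane M a a a LM Ma na) as [y [My [ny [ya _]]]].
  assert (Xy : X y) by exact (X_line_to_secant_closed M a v y Xa sv hv LM Ma Mv My ny).
  assert (collinear Ln u y) as [P [LP [Pu Py]]].
  { apply (collinear_line_closed u M a v y); auto.
    - exact (collinear_sym a u (X_collinear_hull a u Xa Yu)).
    - exists l; auto.
    - intro; subst; exact (na hv). }
  assert (collinear Ln a w) as [N [LN [Na Nw]]].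
  { apply (collinear_line_closed a l u v w); auto; apply X_collinear_hull; auto. }
  assert (P_not_M : ~ P a).
  { intro Pa. apply nMu. apply (seteq_lines_of_two_points P M a y); auto. }
  assert (meet N P) as [z [Nz Pz]].
  { apply (veblenM v l M N P); auto.
    - exact (not_seteq_of_point l M u lu nMu).
    - exact (not_seteq_of_point N P a Na P_not_M).
    - intro Nv. apply nla. apply (seteq_lines_of_two_points N l w v); auto.
    - intro Pv. apply ny, l_in_H. apply (seteq_lines_of_two_points P l u v); auto.
    - exists w; auto.
    - exists a; auto.
    - exists u; auto.
    - exists y; auto. }
  assert (nz : ~ H z).
  { intro hz.
    assert (z = u) as -> by exact (hyperplane_line_uniq P y z u LP Py ny Pz Pu hz hu).
    apply nla. apply (seteq_lines_of_two_points N l w u); auto. }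
  assert (Xz : X z)
    by exact (X_line_to_secant_closed P y u z Xy su hu LP Py Pu Pz nz).
  assert (za : z <> a) by (intro; subst; exact (P_not_M Pz)).
  exists a, z, N. repeat split; auto.
Qed.

Lemma hull_strong_subspace : strong_subspace fullset Ln hull.
Proof.
  split; [split |].
  - intros x _. exact I.
  - intros l Ll a b ab la lb Ya Yb p lp.
    destruct (classic (H a)) as [ha | na]; destruct (classic (H b)) as [hb | nb].
    + right. exact (secant_line_closed_H_H l a b p
                      (hull_on_H a Ya ha) (hull_on_H b Yb hb) ab ha hb Ll la lb lp).
    + exact (hull_line_closed_X_H l b a p (hull_off_H b Yb nb) Ya ha Ll lb la lp).
    + exact (hull_line_closed_X_H l a b p (hull_off_H a Ya na) Yb hb Ll la lb lp).
    + right. exists a, b, l.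
      repeat split; auto; apply hull_off_H; assumption.
  - exact hull_collinear.
Qed.

Lemma hull_trace : seteq X (fun x => hull x /\ ~ H x).
Proof.
  intro x. split.
  - intro Xx. split; [left; exact Xx | exact (X_off_H x Xx)].
  - intros [Yx nx]. exact (hull_off_H x Yx nx).
Qed.

End StrongSubspaceOfComplement.

End HyperplaneComplement.

Theorem lemma2p4 (T : Type) (Ln : (T -> Prop) -> Prop) (H : T -> Prop) :
  gamma_space Ln -> veblenian Ln -> lines_at_least_4 Ln -> hyperplane Ln H ->
  forall X : T -> Prop,
    strong_subspace (compl_points H) (compl_lines Ln H) X <->
    exists Y : T -> Prop, strong_subspace fullset Ln Y /\
      seteq X (fun x => Y x /\ ~ H x).
Proof.
  intros gammaM veblenM thickM hypH X. split.
  - intro strongX. exists (hull T Ln X). split.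
    + apply (hull_strong_subspace T Ln H); assumption.
    + apply (hull_trace T Ln H); assumption.
  - intros [Y [strongY EY]].
    apply (strong_subspace_seteq _ _ (fun x => Y x /\ ~ H x) X).
    + intro x. split; apply EY.
    + apply (strong_subspace_trace T Ln H); assumption.
Qed.
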